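(* Let $G$ be a set, $\kappa$ a regular cardinal, $L$ a normal modal logic with the finite model property and $T\subseteq\mathrm{Fm}_\kappa(G)$. Then the Lindenbaum–Tarski algebra $\mathrm{LT}_L(G,\kappa,T)$ is a $\kappa$-complete $L$-algebra (every subset of cardinality $<\kappa$ has a meet and a join), with $\bigwedge\{[\psi]:\psi\in S\}=[\bigwedge S]$ and $\bigvee\{[\psi]:\psi\in S\}=[\bigvee S]$ for $|S|<\kappa$.
   Context: $\mathrm{Fm}_\kappa(G)$ is the least set containing $G$ closed under $\neg$, $\Box$, and $\bigwedge S,\bigvee S$ for sets $S$ of size $<\kappa$; $\varphi\leftrightarrow\psi$ abbreviates $(\neg\varphi\vee\psi)\wedge(\neg\psi\vee\varphi)$ with binary $\wedge,\vee$ meaning $\bigwedge,\bigvee$ of two-element sets. The calculus $(G,\kappa,L,T)$ has rules: (Ax) $\varphi\Rightarrow\varphi$; (W) from $\Gamma\Rightarrow\Delta$ infer $\Gamma,\Gamma'\Rightarrow\Delta,\Delta'$; (Cut) from $\Gamma\Rightarrow\Delta,\varphi$ for every $\varphi\in S$ and $S,\Gamma'\Rightarrow\Delta'$ infer $\Gamma,\Gamma'\Rightarrow\Delta,\Delta'$; (L$\neg$) from $\Gamma\Rightarrow\Delta,S$ infer $\neg S,\Gamma\Rightarrow\Delta$; (R$\neg$) from $S,\Gamma\Rightarrow\Delta$ infer $\Gamma\Rightarrow\Delta,\neg S$; for a family $\mathscr S$ of sets each of size $<\kappa$: (L$\bigwedge$) from $\bigcup\mathscr S,\Gamma\Rightarrow\Delta$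 infer $\{\bigwedge S\},\Gamma\Rightarrow\Delta$; (R$\bigwedge$) from $\Gamma\Rightarrow\Delta,\{c(S):S\in\mathscr S\}$ for every choice function $c$ infer $\Gamma\Rightarrow\Delta,\{\bigwedge S:S\in\mathscr S\}$; (L$\bigvee$) from $\{c(S)\},\Gamma\Rightarrow\Delta$ for every choice function $c$ infer $\{\bigvee S:S\in\mathscr S\},\Gamma\Rightarrow\Delta$; (R$\bigvee$) from $\Gamma\Rightarrow\Delta,\bigcup\mathscr S$ infer $\Gamma\Rightarrow\Delta,\{\bigvee S\}$; (Nec) from $S\Rightarrow\varphi$ infer $\Box S\Rightarrow\Box\varphi$; (lf) for sets $S_n$ of size $<\kappa$: from $\{\Box^n\bigvee(I\cap S_n):n\in\omega\},\Gamma\Rightarrow\Delta$ for every finite $I\subseteq\bigcup_nS_n$ infer $\{\Box^n\bigvee S_n:n\in\omega\},\Gamma\Rightarrow\Delta$; (T,L) from $S,\Gamma\Rightarrow\Delta$ infer $\Gamma\Rightarrow\Delta$ for $S\subseteq T\cup L_{(G,\kappa)}$ ($L_{(G,\kappa)}$ = substitution instances in $\mathrm{Fm}_\kappa(G)$ of theorems of $L$). Proofs are well-founded trees. $\mathrm{LT}_L(G,\kappa,T)$ is the quotient of $\mathrm{Fm}_\kappa(G)$ by $\varphi\sim\psi\iff(G,\kappa,L,T)\vdash\ \Rightarrow\varphi\leftrightarrow\psi$, with operations defined on representatives; $[\varphi]\le[\psi]$ iff $\varphi\Rightarrow\psi$ is provable. An $L$-algebra is a modal algebra in the variety corresponding to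 $L$. *)

From Stdlib Require Import List ClassicalEpsilon.
Set Implicit Arguments.

(** Universe of index sets for infinitary conjunctions/disjunctions;
    the cardinal kappa is represented by a type K : IdxT. *)
Definition IdxT := Type.

Definition lt_card (A B : Type) : Prop :=
  (exists f : A -> B, forall x y, f x = f y -> x = y) /\
  ~ (exists g : B -> A, forall x y, g x = g y -> x = y).

Definition regular (K : IdxT) : Prop :=
  (exists e : nat -> K, forall m n, e m = e n -> m = n) /\
  (forall (I : IdxT) (A : I -> IdxT), lt_card I K ->
     (forall i, lt_card (A i) K) -> lt_card {i : I & A i} K).

Inductive fm (G : Type) : Type :=
| Var : G -> fm G
| Neg : fm G -> fm G
| Box : fm G -> fm G
| BigAnd : forall I : IdxT, (I -> fm G) -> fm G
| BigOr : forall I : IdxT, (I -> fm G) -> fm G.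
Arguments Var {G}. Arguments Neg {G}. Arguments Box {G}.
Arguments BigAnd {G}. Arguments BigOr {G}.

Inductive Fmk (G : Type) (K : IdxT) : fm G -> Prop :=
| FVar : forall g, Fmk K (Var g)
| FNeg : forall p, Fmk K p -> Fmk K (Neg p)
| FBox : forall p, Fmk K p -> Fmk K (Box p)
| FAnd : forall (I : IdxT) (f : I -> fm G), lt_card I K ->
           (forall i, Fmk K (f i)) -> Fmk K (BigAnd I f)
| FOr : forall (I : IdxT) (f : I -> fm G), lt_card I K ->
           (forall i, Fmk K (f i)) -> Fmk K (BigOr I f).

Definition And2 {G} (a b : fm G) : fm G := BigAnd bool (fun t => if t then a else b).
Definition Or2 {G} (a b : fm G) : fm G := BigOr bool (fun t => if t then a else b).
Definition Iff {G} (p q : fm G) : fm G := And2 (Or2 (Neg p) q) (Or2 (Neg q) p).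
Definition Boxn {G} (n : nat) (p : fm G) : fm G := Nat.iter n Box p.

Definition fset (G : Type) := fm G -> Prop.
Definition emp {G} : fset G := fun _ => False.
Definition sing {G} (p : fm G) : fset G := fun x => x = p.
Definition U {G} (A B : fset G) : fset G := fun x => A x \/ B x.
Definition negs {G} (S : fset G) : fset G := fun x => exists p, S p /\ x = Neg p.
Definition boxes {G} (S : fset G) : fset G := fun x => exists p, S p /\ x = Box p.
Definition subF {G} (K : IdxT) (S : fset G) : Prop := forall x, S x -> Fmk K x.

Inductive mf : Type :=
| MV : nat -> mf
| MN : mf -> mf
| MA : mf -> mf -> mf
| MO : mf -> mf -> mf
| MB : mf -> mf.
Definition MImp (a b : mf) : mf := MO (MN a) b.

Fixpoint msubst (s : nat -> mf) (p : mf) : mf :=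
  match p with
  | MV n => s n | MN a => MN (msubst s a)
  | MA a b => MA (msubst s a) (msubst s b)
  | MO a b => MO (msubst s a) (msubst s b)
  | MB a => MB (msubst s a) end.

Fixpoint beval (v : nat -> bool) (bx : mf -> bool) (p : mf) : bool :=
  match p with
  | MV n => v n | MN a => negb (beval v bx a)
  | MA a b => andb (beval v bx a) (beval v bx b)
  | MO a b => orb (beval v bx a) (beval v bx b)
  | MB a => bx a end.
Definition taut (p : mf) : Prop := forall v bx, beval v bx p = true.

Record normal_logic (L : mf -> Prop) : Prop := {
  nl_taut : forall p, taut p -> L p;
  nl_K : forall p q, L (MImp (MB (MImp p q)) (MImp (MB p) (MB q)));
  nl_MP : forall p q, L p -> L (MImp p q) -> L q;
  nl_nec : forall p, L p -> L (MB p);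
  nl_subst : forall p s, L p -> L (msubst s p) }.

Fixpoint kval {W : Type} (R : W -> W -> Prop) (V : nat -> W -> Prop) (w : W) (p : mf) : Prop :=
  match p with
  | MV n => V n w | MN a => ~ kval R V w a
  | MA a b => kval R V w a /\ kval R V w b
  | MO a b => kval R V w a \/ kval R V w b
  | MB a => forall u, R w u -> kval R V u a end.

Definition fmp (L : mf -> Prop) : Prop :=
  forall p, ~ L p ->
  exists (W : Type) (enum : list W) (R : W -> W -> Prop),
    (forall w, In w enum) /\
    (forall q, L q -> forall V w, kval R V w q) /\
    (exists V w, ~ kval R V w p).

(** translation (substitution instance) of a finitary formula into fm G *)
Fixpoint tr {G} (s : nat -> fm G) (p : mf) : fm G :=
  match p with
  | MV n => s n | MN a => Neg (tr s a)
  | MA a b => And2 (tr s a) (tr s b)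
  | MO a b => Or2 (tr s a) (tr s b)
  | MB a => Box (tr s a) end.

Definition Linst (G : Type) (K : IdxT) (L : mf -> Prop) : fset G :=
  fun x => Fmk K x /\ exists p s, L p /\ x = tr s p.

(** The calculus (G,kappa,L,T); [prov Gam Del] means Gam => Del is provable
    (proofs are well-founded trees = inductive derivations). *)
Inductive prov (G : Type) (K : IdxT) (L : mf -> Prop) (T : fset G) : fset G -> fset G -> Prop :=
| R_Ax : forall p, Fmk K p -> prov K L T (sing p) (sing p)
| R_W : forall Gam Del Gam' Del', prov K L T Gam Del -> subF K Gam' -> subF K Del' ->
    prov K L T (U Gam Gam') (U Del Del')
| R_Cut : forall (S Gam Del Gam' Del' : fset G),
    subF K Gam -> subF K Del ->
    (forall p, S p -> prov K L T Gam (U Del (sing p))) ->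
    prov K L T (U S Gam') Del' -> prov K L T (U Gam Gam') (U Del Del')
| R_LNeg : forall S Gam Del, prov K L T Gam (U Del S) -> prov K L T (U (negs S) Gam) Del
| R_RNeg : forall S Gam Del, prov K L T (U S Gam) Del -> prov K L T Gam (U Del (negs S))
| R_LAnd : forall (J : Type) (Ix : J -> IdxT) (F : forall j, Ix j -> fm G) Gam Del,
    (forall j, lt_card (Ix j) K) -> (forall j i, Fmk K (F j i)) ->
    prov K L T (U (fun x => exists j i, x = F j i) Gam) Del ->
    prov K L T (U (fun x => exists j, x = BigAnd (Ix j) (F j)) Gam) Del
| R_RAnd : forall (J : Type) (Ix : J -> IdxT) (F : forall j, Ix j -> fm G) Gam Del,
    (forall j, lt_card (Ix j) K) -> (forall j i, Fmk K (F j i)) ->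
    subF K Gam -> subF K Del ->
    (forall c : forall j, Ix j, prov K L T Gam (U Del (fun x => exists j, x = F j (c j)))) ->
    prov K L T Gam (U Del (fun x => exists j, x = BigAnd (Ix j) (F j)))
| R_LOr : forall (J : Type) (Ix : J -> IdxT) (F : forall j, Ix j -> fm G) Gam Del,
    (forall j, lt_card (Ix j) K) -> (forall j i, Fmk K (F j i)) ->
    subF K Gam -> subF K Del ->
    (forall c : forall j, Ix j, prov K L T (U (fun x => exists j, x = F j (c j)) Gam) Del) ->
    prov K L T (U (fun x => exists j, x = BigOr (Ix j) (F j)) Gam) Del
| R_ROr : forall (J : Type) (Ix : J -> IdxT) (F : forall j, Ix j -> fm G) Gam Del,
    (forall j, lt_card (Ix j) K) -> (forall j i, Fmk K (F j i)) ->
    prov K L T Gam (U Del (fun x => exists j i, x = F j i)) ->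
    prov K L T Gam (U Del (fun x => exists j, x = BigOr (Ix j) (F j)))
| R_Nec : forall S p, prov K L T S (sing p) -> prov K L T (boxes S) (sing (Box p))
| R_lf : forall (Ix : nat -> IdxT) (F : forall n, Ix n -> fm G) Gam Del,
    (forall n, lt_card (Ix n) K) -> (forall n i, Fmk K (F n i)) ->
    subF K Gam -> subF K Del ->
    (forall l : list (fm G), (forall x, In x l -> exists n i, x = F n i) ->
       prov K L T
         (U (fun x => exists n, x = Boxn n (BigOr {i : Ix n | In (F n i) l}
                                               (fun i => F n (proj1_sig i)))) Gam) Del) ->
    prov K L T (U (fun x => exists n, x = Boxn n (BigOr (Ix n) (F n))) Gam) Del
| R_TL : forall S Gam Del, (forall x, S x -> T x \/ Linst K L x) ->
    prov K L T (U S Gam) Del -> prov K L T Gam Del.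

Record MAops (A : Type) := {
  mtop : A; mbot : A; mmeet : A -> A -> A; mjoin : A -> A -> A;
  mneg : A -> A; mbox : A -> A }.

Record boolean_algebra {A} (o : MAops A) : Prop := {
  ba_meetC : forall a b, mmeet o a b = mmeet o b a;
  ba_joinC : forall a b, mjoin o a b = mjoin o b a;
  ba_meetA : forall a b c, mmeet o a (mmeet o b c) = mmeet o (mmeet o a b) c;
  ba_joinA : forall a b c, mjoin o a (mjoin o b c) = mjoin o (mjoin o a b) c;
  ba_absm : forall a b, mmeet o a (mjoin o a b) = a;
  ba_absj : forall a b, mjoin o a (mmeet o a b) = a;
  ba_distm : forall a b c, mmeet o a (mjoin o b c) = mjoin o (mmeet o a b) (mmeet o a c);
  ba_distj : forall a b c, mjoin o a (mmeet o b c) = mmeet o (mjoin o a b) (mjoin o a c);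
  ba_top : forall a, mmeet o a (mtop o) = a;
  ba_bot : forall a, mjoin o a (mbot o) = a;
  ba_compm : forall a, mmeet o a (mneg o a) = mbot o;
  ba_compj : forall a, mjoin o a (mneg o a) = mtop o }.

Definition modal_algebra {A} (o : MAops A) : Prop :=
  boolean_algebra o /\ mbox o (mtop o) = mtop o /\
  (forall a b, mbox o (mmeet o a b) = mmeet o (mbox o a) (mbox o b)).

Fixpoint aeval {A} (o : MAops A) (v : nat -> A) (p : mf) : A :=
  match p with
  | MV n => v n | MN a => mneg o (aeval o v a)
  | MA a b => mmeet o (aeval o v a) (aeval o v b)
  | MO a b => mjoin o (aeval o v a) (aeval o v b)
  | MB a => mbox o (aeval o v a) end.

Definition L_algebra (L : mf -> Prop) {A} (o : MAops A) : Prop :=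
  modal_algebra o /\ (forall p, L p -> forall v, aeval o v p = mtop o).

Definition mle {A} (o : MAops A) (a b : A) : Prop := mmeet o a b = a.
Definition is_glb {A} (o : MAops A) (X : A -> Prop) (m : A) : Prop :=
  (forall x, X x -> mle o m x) /\ (forall y, (forall x, X x -> mle o y x) -> mle o y m).
Definition is_lub {A} (o : MAops A) (X : A -> Prop) (m : A) : Prop :=
  (forall x, X x -> mle o x m) /\ (forall y, (forall x, X x -> mle o x y) -> mle o m y).

Definition kappa_complete (K : IdxT) {A} (o : MAops A) : Prop :=
  forall X : A -> Prop, lt_card {x : A | X x} K ->
    (exists m, is_glb o X m) /\ (exists j, is_lub o X j).

Lemma regular_bool (K : IdxT) : regular K -> lt_card bool K.
Proof.
  intros [[e he] _]. split.
  - exists (fun t : bool => if t then e 0 else e 1).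
    intros [|] [|] H; auto; apply he in H; discriminate.
  - intros [g hg].
    destruct (g (e 0)) eqn:E0, (g (e 1)) eqn:E1, (g (e 2)) eqn:E2;
      try (assert (H: 0 = 1) by (apply he, hg; congruence); discriminate);
      try (assert (H: 0 = 2) by (apply he, hg; congruence); discriminate);
      try (assert (H: 1 = 2) by (apply he, hg; congruence); discriminate).
Qed.

Lemma regular_empty (K : IdxT) : regular K -> lt_card Empty_set K.
Proof.
  intros [[e he] _]. split.
  - exists (fun x : Empty_set => match x with end). intros [].
  - intros [g _]. destruct (g (e 0)).
Qed.

Section LT.
Variables (G : Type) (K : IdxT) (L : mf -> Prop) (T : fset G).

Definition equivF (p q : fm G) : Prop := prov K L T emp (sing (Iff p q)).
Definition cls (p : fm G) : fset G := fun q => Fmk K q /\ equivF p q.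

Definition LTcar : Type := {c : fset G | exists p, Fmk K p /\ c = cls p}.

Definition rep (x : LTcar) : fm G :=
  proj1_sig (constructive_indefinite_description _ (proj2_sig x)).
Lemma rep_ok (x : LTcar) : Fmk K (rep x).
Proof. unfold rep. exact (proj1 (proj2_sig (constructive_indefinite_description _ (proj2_sig x)))). Qed.

Definition mkLT (p : fm G) (H : Fmk K p) : LTcar :=
  exist _ (cls p) (ex_intro _ p (conj H eq_refl)).

Variable HK : regular K.

Lemma Fmk_And2 (p q : fm G) : Fmk K p -> Fmk K q -> Fmk K (And2 p q).
Proof. intros; apply FAnd; [apply regular_bool, HK | intros [|]; auto]. Qed.
Lemma Fmk_Or2 (p q : fm G) : Fmk K p -> Fmk K q -> Fmk K (Or2 p q).
Proof. intros; apply FOr; [apply regular_bool, HK | intros [|]; auto]. Qed.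

Definition TopF : fm G := BigAnd Empty_set (fun e => match e with end).
Definition BotF : fm G := BigOr Empty_set (fun e => match e with end).
Lemma Fmk_Top : Fmk K TopF.
Proof. apply FAnd; [apply regular_empty, HK | intros []]. Qed.
Lemma Fmk_Bot : Fmk K BotF.
Proof. apply FOr; [apply regular_empty, HK | intros []]. Qed.

Definition LT_ops : MAops LTcar := {|
  mtop := mkLT Fmk_Top;
  mbot := mkLT Fmk_Bot;
  mmeet := fun a b => mkLT (Fmk_And2 (rep_ok a) (rep_ok b));
  mjoin := fun a b => mkLT (Fmk_Or2 (rep_ok a) (rep_ok b));
  mneg := fun a => mkLT (FNeg (rep_ok a));
  mbox := fun a => mkLT (FBox (rep_ok a)) |}.
End LT.

(* Every Boolean and modal law between classes is a pair of sequents
   derivable with the propositional rules and (Nec), and every theorem of L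
   evaluates to the top class because rule (T,L) makes each of its
   substitution instances provable outright.  For |S| < kappa the rules
   (L/\) and (R/\) say precisely that [/\S] lies below each [psi], psi in S,
   and above every common lower bound, so [/\S] is the meet; dually for \/. *)

From Stdlib Require Import List ClassicalEpsilon FunctionalExtensionality
  PropExtensionality ProofIrrelevance.
Import ListNotations.

Lemma small_pred_enum {K : IdxT} {A : Type} {X : A -> Prop} :
  lt_card {x : A | X x} K ->
  exists (I : IdxT) (e : I -> A), lt_card I K /\ forall x, X x <-> exists i, x = e i.
Proof.
  intros [[g g_inj] no_inj].
  set (I := {k : K | exists y, g y = k}).
  set (pre := fun i : I => constructive_indefinite_description _ (proj2_sig i)).
  assert (g_pre : forall i, g (proj1_sig (pre i)) = proj1_sig i).
  { intro i; exact (proj2_sig (pre i)). }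
  assert (val_inj : forall i j : I, proj1_sig i = proj1_sig j -> i = j).
  { intros [i Hi] [j Hj]; simpl; intros E; apply subset_eq_compat, E. }
  exists I, (fun i => proj1_sig (proj1_sig (pre i))). split; [split|].
  - exists (@proj1_sig _ _); exact val_inj.
  - intros [h h_inj]; apply no_inj.
    exists (fun k => proj1_sig (pre (h k))).
    intros k1 k2 E; apply h_inj, val_inj; rewrite <- !g_pre, E; reflexivity.
  - intro x; split.
    + intro Hx. set (i := exist _ (g (exist _ x Hx)) (ex_intro _ _ eq_refl) : I).
      exists i. assert (E : proj1_sig (pre i) = exist _ x Hx) by apply g_inj, g_pre.
      rewrite E; reflexivity.
    + intros [i ->]. exact (proj2_sig (proj1_sig (pre i))).
Qed.

Section Sequents.
Context {G : Type} {K : IdxT} {L : mf -> Prop} {T : fset G}.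

Definition lset (l : list (fm G)) : fset G := fun x => In x l.

Local Notation "l1 ⊢ l2" := (prov K L T (lset l1) (lset l2)) (at level 70).

Lemma fset_ext (A B : fset G) : (forall x, A x <-> B x) -> A = B.
Proof.
  intro H; apply functional_extensionality; intro x.
  apply propositional_extensionality, H.
Qed.

Ltac set_eq := apply fset_ext; intro; unfold U, lset, sing, negs, boxes; simpl;
  pose proof tt; firstorder (subst; eauto).

Lemma sing_lset (p : fm G) : sing p = lset [p].
Proof. set_eq. Qed.

Lemma emp_lset : @emp G = lset [].
Proof. set_eq. Qed.

Lemma lset_Forall (l : list (fm G)) : subF K (lset l) <-> Forall (Fmk K) l.
Proof. rewrite Forall_forall; reflexivity. Qed.

Lemma Fmk_inv {p : fm G} : Fmk K p ->
  match p return Prop with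
  | Var _ => True
  | Neg q => Fmk K q
  | Box q => Fmk K q
  | BigAnd J f => lt_card J K /\ forall i, Fmk K (f i)
  | BigOr J f => lt_card J K /\ forall i, Fmk K (f i)
  end.
Proof. destruct 1; auto. Qed.

Lemma Fmk_Boxn n (p : fm G) : Fmk K p -> Fmk K (Boxn n p).
Proof. induction n; simpl; auto using FBox. Qed.

Lemma prov_Fmk {A B : fset G} : prov K L T A B -> subF K A /\ subF K B.
Proof.
  induction 1; unfold subF, U, sing, negs, boxes in *.
  - split; intros x ->; auto.
  - firstorder.
  - destruct IHprov as [Y1 Y2]. split; intros x [Hx|Hx]; auto.
  - destruct IHprov as [Y1 Y2]. split; [intros x [[q [Hq ->]]|Hx]|]; auto using FNeg.
  - destruct IHprov as [Y1 Y2]. split; [|intros x [Hx|[q [Hq ->]]]]; auto using FNeg.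
  - destruct IHprov as [Y1 Y2]. split; [intros x [[j ->]|Hx]|]; auto using FAnd.
  - split; [|intros x [Hx|[j ->]]]; auto using FAnd.
  - split; [intros x [[j ->]|Hx]|]; auto using FOr.
  - destruct IHprov as [Y1 Y2]. split; [|intros x [Hx|[j ->]]]; auto using FOr.
  - destruct IHprov as [Y1 Y2].
    split; [intros x [q [Hq ->]]|intros x ->]; apply FBox; auto.
  - split; [intros x [[n ->]|Hx]|]; auto using Fmk_Boxn, FOr.
  - destruct IHprov as [Y1 Y2]. split; auto.
Qed.

Lemma prov_weaken {A B : fset G} (A' B' : fset G) : prov K L T A B -> subF K A' -> subF K B' ->
  (forall x, A x -> A' x) -> (forall x, B x -> B' x) -> prov K L T A' B'.
Proof.
  intros H HA HB IA IB.
  replace A' with (U A A') by (apply fset_ext; unfold U; firstorder).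
  replace B' with (U B B') by (apply fset_ext; unfold U; firstorder).
  apply R_W; auto.
Qed.

Lemma derive_weaken {m1 m2 l1 l2 : list (fm G)} : m1 ⊢ m2 -> incl m1 l1 -> incl m2 l2 ->
  Forall (Fmk K) l1 -> Forall (Fmk K) l2 -> l1 ⊢ l2.
Proof. rewrite <- !lset_Forall; intros; eapply prov_weaken; eauto. Qed.

Lemma derive_ax (p : fm G) {l1 l2 : list (fm G)} : Forall (Fmk K) l1 -> Forall (Fmk K) l2 ->
  In p l1 -> In p l2 -> l1 ⊢ l2.
Proof.
  intros F1 F2 I1 I2. apply (derive_weaken (m1 := [p]) (m2 := [p])); try intros x [<-|[]]; auto.
  rewrite <- sing_lset. apply R_Ax. rewrite Forall_forall in F1; auto.
Qed.

Lemma derive_cut (p : fm G) {l1 l2 : list (fm G)} : l1 ⊢ p :: l2 -> p :: l1 ⊢ l2 -> l1 ⊢ l2.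
Proof.
  intros H1 H2. destruct (prov_Fmk H1) as [F1 F2].
  assert (dup : forall l, U (lset l) (lset l) = lset l) by (intro; set_eq).
  rewrite <- (dup l1), <- (dup l2). apply (R_Cut (S := sing p)).
  - exact F1.
  - intros x Hx; apply F2; right; exact Hx.
  - intros q ->. replace (U (lset l2) (sing p)) with (lset (p :: l2)) by set_eq. exact H1.
  - replace (U (sing p) (lset l1)) with (lset (p :: l1)) by set_eq. exact H2.
Qed.

Lemma derive_LNeg {p : fm G} {l1 l2 : list (fm G)} : l1 ⊢ p :: l2 -> Neg p :: l1 ⊢ l2.
Proof.
  intro H. replace (lset (Neg p :: l1)) with (U (negs (sing p)) (lset l1)) by set_eq.
  apply R_LNeg. replace (U (lset l2) (sing p)) with (lset (p :: l2)) by set_eq. exact H.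
Qed.

Lemma derive_RNeg {p : fm G} {l1 l2 : list (fm G)} : p :: l1 ⊢ l2 -> l1 ⊢ Neg p :: l2.
Proof.
  intro H. replace (lset (Neg p :: l2)) with (U (lset l2) (negs (sing p))) by set_eq.
  apply R_RNeg. replace (U (sing p) (lset l1)) with (lset (p :: l1)) by set_eq. exact H.
Qed.

(* The rules for big connectives act on a family of them; a single one is the
   family indexed by [unit]. *)
Lemma derive_LAnd {I : IdxT} {f : I -> fm G} {l1 l2 : list (fm G)} : Fmk K (BigAnd I f) ->
  prov K L T (U (fun x => exists i, x = f i) (lset l1)) (lset l2) ->
  BigAnd I f :: l1 ⊢ l2.
Proof.
  intros HF H.
  replace (lset (BigAnd I f :: l1))
    with (U (fun x => exists j : unit, x = BigAnd ((fun _ => I) j) ((fun _ => f) j)) (lset l1))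
    by set_eq.
  destruct (Fmk_inv HF) as [HI Hf]. apply R_LAnd; auto.
  replace (U (fun x => exists (j : unit) i, x = f i) (lset l1))
    with (U (fun x => exists i, x = f i) (lset l1)) by set_eq.
  exact H.
Qed.

Lemma derive_ROr {I : IdxT} {f : I -> fm G} {l1 l2 : list (fm G)} : Fmk K (BigOr I f) ->
  prov K L T (lset l1) (U (lset l2) (fun x => exists i, x = f i)) ->
  l1 ⊢ BigOr I f :: l2.
Proof.
  intros HF H.
  replace (lset (BigOr I f :: l2))
    with (U (lset l2) (fun x => exists j : unit, x = BigOr ((fun _ => I) j) ((fun _ => f) j)))
    by set_eq.
  destruct (Fmk_inv HF) as [HI Hf]. apply R_ROr; auto.
  replace (U (lset l2) (fun x => exists (j : unit) i, x = f i))
    with (U (lset l2) (fun x => exists i, x = f i)) by set_eq.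
  exact H.
Qed.

Lemma derive_LAnd_at {I : IdxT} {f : I -> fm G} (i : I) {l1 l2 : list (fm G)} :
  Fmk K (BigAnd I f) -> f i :: l1 ⊢ l2 -> BigAnd I f :: l1 ⊢ l2.
Proof.
  intros HF H. destruct (Fmk_inv HF) as [HI Hf]. destruct (prov_Fmk H) as [F1 F2].
  apply derive_LAnd; auto. eapply prov_weaken; [exact H| |exact F2| |auto].
  - intros x [[j ->]|Hx]; [auto|apply F1; right; exact Hx].
  - intros x [<-|Hx]; [left; exists i|right]; auto.
Qed.

Lemma derive_ROr_at {I : IdxT} {f : I -> fm G} (i : I) {l1 l2 : list (fm G)} :
  Fmk K (BigOr I f) -> l1 ⊢ f i :: l2 -> l1 ⊢ BigOr I f :: l2.
Proof.
  intros HF H. destruct (Fmk_inv HF) as [HI Hf]. destruct (prov_Fmk H) as [F1 F2].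
  apply derive_ROr; auto. eapply prov_weaken; [exact H|exact F1| | auto|].
  - intros x [Hx|[j ->]]; [apply F2; right; exact Hx|auto].
  - intros x [<-|Hx]; [right; exists i|left]; auto.
Qed.

Lemma derive_RAnd {I : IdxT} {f : I -> fm G} {l1 l2 : list (fm G)} : Fmk K (BigAnd I f) ->
  (forall i, l1 ⊢ f i :: l2) -> Forall (Fmk K) l1 -> Forall (Fmk K) l2 ->
  l1 ⊢ BigAnd I f :: l2.
Proof.
  rewrite <- !lset_Forall. intros HF H F1 F2.
  replace (lset (BigAnd I f :: l2))
    with (U (lset l2) (fun x => exists j : unit, x = BigAnd ((fun _ => I) j) ((fun _ => f) j)))
    by set_eq.
  destruct (Fmk_inv HF) as [HI Hf]. apply R_RAnd; auto. intros c.
  replace (U (lset l2) (fun x => exists j : unit, x = f (c j))) with (lset (f (c tt) :: l2)).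
  - apply H.
  - apply fset_ext; intro y; unfold U, lset; simpl; split.
    + intros [E|Hy]; [right; exists tt|left]; auto.
    + intros [Hy|[[] E]]; auto.
Qed.

Lemma derive_LOr {I : IdxT} {f : I -> fm G} {l1 l2 : list (fm G)} : Fmk K (BigOr I f) ->
  (forall i, f i :: l1 ⊢ l2) -> Forall (Fmk K) l1 -> Forall (Fmk K) l2 ->
  BigOr I f :: l1 ⊢ l2.
Proof.
  rewrite <- !lset_Forall. intros HF H F1 F2.
  replace (lset (BigOr I f :: l1))
    with (U (fun x => exists j : unit, x = BigOr ((fun _ => I) j) ((fun _ => f) j)) (lset l1))
    by set_eq.
  destruct (Fmk_inv HF) as [HI Hf]. apply R_LOr; auto. intros c.
  replace (U (fun x => exists j : unit, x = f (c j)) (lset l1)) with (lset (f (c tt) :: l1)).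
  - apply H.
  - apply fset_ext; intro y; unfold U, lset; simpl; split.
    + intros [E|Hy]; [left; exists tt|right]; auto.
    + intros [[[] E]|Hy]; auto.
Qed.

Lemma derive_Nec {l : list (fm G)} {p : fm G} : l ⊢ [p] -> map Box l ⊢ [Box p].
Proof.
  intro H. rewrite <- !sing_lset.
  replace (lset (map Box l)) with (boxes (lset l)).
  - apply R_Nec. rewrite sing_lset. exact H.
  - apply fset_ext; unfold lset, boxes; intro x; rewrite in_map_iff; firstorder.
Qed.

Context (HK : regular K).

Lemma derive_LAnd2 {a b : fm G} {l1 l2 : list (fm G)} :
  a :: b :: l1 ⊢ l2 -> And2 a b :: l1 ⊢ l2.
Proof.
  intros H. destruct (prov_Fmk H) as [F1 F2].
  apply derive_LAnd; [apply Fmk_And2; auto; apply F1; simpl; auto|].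
  replace (U (fun x => exists i : bool, x = (if i then a else b)) (lset l1)) with (lset (a :: b :: l1)).
  - exact H.
  - apply fset_ext; unfold U, lset; simpl; intro x; split.
    + intros [->|[->|Hx]]; auto; left; [exists true|exists false]; auto.
    + intros [[[|] ->]|Hx]; auto.
Qed.

Lemma derive_ROr2 {a b : fm G} {l1 l2 : list (fm G)} :
  l1 ⊢ a :: b :: l2 -> l1 ⊢ Or2 a b :: l2.
Proof.
  intros H. destruct (prov_Fmk H) as [F1 F2].
  apply derive_ROr; [apply Fmk_Or2; auto; apply F2; simpl; auto|].
  replace (U (lset l2) (fun x => exists i : bool, x = (if i then a else b))) with (lset (a :: b :: l2)).
  - exact H.
  - apply fset_ext; unfold U, lset; simpl; intro x; split.
    + intros [->|[->|Hx]]; auto; right; [exists true|exists false]; auto.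
    + intros [Hx|[[|] ->]]; auto.
Qed.

Lemma derive_RAnd2 {a b : fm G} {l1 l2 : list (fm G)} :
  l1 ⊢ a :: l2 -> l1 ⊢ b :: l2 -> l1 ⊢ And2 a b :: l2.
Proof.
  intros H1 H2. destruct (prov_Fmk H1) as [F1 F2], (prov_Fmk H2) as [_ F4].
  apply derive_RAnd.
  - apply Fmk_And2; auto; [apply F2|apply F4]; simpl; auto.
  - intros [|]; auto.
  - apply lset_Forall, F1.
  - apply lset_Forall; intros x Hx; apply F2; simpl; auto.
Qed.

Lemma derive_LOr2 {a b : fm G} {l1 l2 : list (fm G)} :
  a :: l1 ⊢ l2 -> b :: l1 ⊢ l2 -> Or2 a b :: l1 ⊢ l2.
Proof.
  intros H1 H2. destruct (prov_Fmk H1) as [F1 F2], (prov_Fmk H2) as [F3 _].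
  apply derive_LOr.
  - apply Fmk_Or2; auto; [apply F1|apply F3]; simpl; auto.
  - intros [|]; auto.
  - apply lset_Forall; intros x Hx; apply F1; simpl; auto.
  - apply lset_Forall, F2.
Qed.

Lemma derive_Top {l1 l2 : list (fm G)} : Forall (Fmk K) l1 -> Forall (Fmk K) l2 ->
  In (TopF G) l2 -> l1 ⊢ l2.
Proof.
  intros F1 F2 I2. apply (derive_weaken (m1 := l1) (m2 := TopF G :: l2)); auto using incl_refl.
  - apply derive_RAnd; auto using Fmk_Top. intros [].
  - intros x [<-|Hx]; auto.
Qed.

Lemma derive_Bot {l1 l2 : list (fm G)} : Forall (Fmk K) l1 -> Forall (Fmk K) l2 ->
  In (BotF G) l1 -> l1 ⊢ l2.
Proof.
  intros F1 F2 I1. apply (derive_weaken (m1 := BotF G :: l1) (m2 := l2)); auto using incl_refl.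
  - apply derive_LOr; auto using Fmk_Bot. intros [].
  - intros x [<-|Hx]; auto.
Qed.

End Sequents.

Ltac solve_Fmk := match goal with HK : regular _ |- _ =>
  solve [repeat first [ assumption | apply (Fmk_And2 HK) | apply (Fmk_Or2 HK)
  | apply FNeg | apply FBox | apply (Fmk_Top _ HK) | apply (Fmk_Bot _ HK) ]] end.
Ltac solve_Fmk_list := repeat (apply Forall_cons; [solve_Fmk|]); apply Forall_nil.
Ltac in_list := solve [repeat first [apply in_eq | apply in_cons]].
Ltac incl_list := solve [let y := fresh "y" in intros y ?; simpl in * |- *; tauto].

Ltac remove p l := match l with
  | p :: ?t => t
  | ?h :: ?t => let r := remove p t in constr:(h :: r) end.
Ltac focusL p := match goal with |- prov _ _ _ (lset ?l1) _ =>
  let r := remove p l1 in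
  replace (lset l1) with (lset (p :: r)) by (apply fset_ext; intro; simpl; tauto) end.
Ltac focusR p := match goal with |- prov _ _ _ _ (lset ?l2) =>
  let r := remove p l2 in
  replace (lset l2) with (lset (p :: r)) by (apply fset_ext; intro; simpl; tauto) end.

Ltac leaf := match goal with |- prov _ _ _ (lset ?l1) (lset ?l2) =>
  match l1 with context [cons ?q _] =>
    apply (derive_ax q); [solve_Fmk_list|solve_Fmk_list|in_list|in_list] end end.
Ltac hyp_leaf := match goal with
  H : prov _ _ _ (lset ?m1) (lset ?m2) |- prov _ _ _ (lset _) (lset _) =>
    apply (derive_weaken H); [incl_list|incl_list|solve_Fmk_list|solve_Fmk_list] end.

Ltac decompose_step := match goal with
  HK : regular _ |- prov _ _ _ (lset ?l1) (lset ?l2) =>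
  first [
    match l2 with context [TopF _] => apply (derive_Top HK); [solve_Fmk_list|solve_Fmk_list|in_list] end
  | match l1 with context [BotF _] => apply (derive_Bot HK); [solve_Fmk_list|solve_Fmk_list|in_list] end
  | match l1 with context [And2 ?a ?b] => focusL (And2 a b); apply (derive_LAnd2 HK) end
  | match l1 with context [Or2 ?a ?b] => focusL (Or2 a b); apply (derive_LOr2 HK) end
  | match l1 with context [Neg ?a] => focusL (Neg a); apply derive_LNeg end
  | match l2 with context [And2 ?a ?b] => focusR (And2 a b); apply (derive_RAnd2 HK) end
  | match l2 with context [Or2 ?a ?b] => focusR (Or2 a b); apply (derive_ROr2 HK) end
  | match l2 with context [Neg ?a] => focusR (Neg a); apply derive_RNeg end ] end.

(* Backward proof search with the invertible propositional rules; a branch is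
   closed by (Ax) or by a hypothesis sequent up to weakening. *)
Ltac propositional := first [leaf | hyp_leaf | once decompose_step; propositional].

Section Lindenbaum_Tarski.
Context {G : Type} {K : IdxT} {L : mf -> Prop} {T : fset G} (HK : regular K).

Local Notation "l1 ⊢ l2" := (prov K L T (lset l1) (lset l2)) (at level 70).
Local Notation A := (LT_ops L T HK).
Local Notation LT := (LTcar K L T).

Definition entails (p q : fm G) : Prop := [p] ⊢ [q].

Lemma entails_Fmk {p q : fm G} : entails p q -> Fmk K p /\ Fmk K q.
Proof. intro H; destruct (prov_Fmk H) as [F1 F2]; split; [apply F1|apply F2]; simpl; auto. Qed.

Lemma entails_refl (p : fm G) : Fmk K p -> entails p p.
Proof. intros; unfold entails; propositional. Qed.

Lemma entails_trans {p q r : fm G} : entails p q -> entails q r -> entails p r.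
Proof.
  intros H1 H2. destruct (entails_Fmk H1), (entails_Fmk H2). unfold entails in *.
  apply (derive_cut q); propositional.
Qed.

Lemma Fmk_Iff_inv {p q : fm G} : Fmk K (Iff p q) -> Fmk K p /\ Fmk K q.
Proof.
  intro H. destruct (Fmk_inv H) as [_ H1].
  destruct (Fmk_inv (H1 true)) as [_ H2]. exact (conj (Fmk_inv (H2 true)) (H2 false)).
Qed.

Lemma equivF_entails (p q : fm G) :
  equivF K L T p q <-> Fmk K p /\ Fmk K q /\ entails p q /\ entails q p.
Proof.
  unfold equivF, entails. rewrite emp_lset, sing_lset. split.
  - intro H. destruct (prov_Fmk H) as [_ F].
    destruct (@Fmk_Iff_inv p q) as [Fp Fq]; [apply F; simpl; auto|].
    repeat split; auto.
    all: apply (derive_cut (Iff p q)); [propositional|unfold Iff; propositional].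
  - intros (Fp & Fq & H1 & H2). unfold Iff. propositional.
Qed.

Lemma cls_self {p : fm G} : Fmk K p -> cls K L T p p.
Proof. intro H; split; auto. apply equivF_entails; repeat split; auto using entails_refl. Qed.

Lemma cls_eq (p q : fm G) : entails p q -> entails q p -> cls K L T p = cls K L T q.
Proof.
  intros H1 H2. destruct (entails_Fmk H1).
  apply fset_ext; intro r; unfold cls; rewrite !equivF_entails.
  split; intros (Fr & _ & _ & H3 & H4); repeat split; eauto using entails_trans.
Qed.

Lemma cls_eq_entails (p q : fm G) : Fmk K p -> Fmk K q ->
  cls K L T p = cls K L T q -> entails p q /\ entails q p.
Proof.
  intros Fp Fq E. pose proof (cls_self Fq) as H. rewrite <- E in H.
  destruct H as [_ H]. apply equivF_entails in H. tauto.
Qed.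

Definition represents (x : LT) (p : fm G) : Prop := Fmk K p /\ proj1_sig x = cls K L T p.

Lemma rep_represents (x : LT) : represents x (rep x).
Proof.
  split; [apply rep_ok|]. unfold rep.
  destruct (constructive_indefinite_description _ (proj2_sig x)) as [p [Hp E]]. exact E.
Qed.

Lemma mkLT_represents {p : fm G} (H : Fmk K p) : represents (mkLT L T H) p.
Proof. split; auto. Qed.

Lemma represents_entails {x : LT} {p q : fm G} :
  represents x p -> represents x q -> entails p q /\ entails q p.
Proof. intros [F1 E1] [F2 E2]. apply cls_eq_entails; congruence. Qed.

Lemma represents_eq {x y : LT} {p q : fm G} : represents x p -> represents y q ->
  entails p q -> entails q p -> x = y.
Proof.
  intros [_ E1] [_ E2] H1 H2. destruct x, y; simpl in *.
  apply subset_eq_compat. rewrite E1, E2. apply cls_eq; auto.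
Qed.

Lemma represents_equiv {x : LT} {p q : fm G} : represents x p ->
  entails p q -> entails q p -> represents x q.
Proof.
  intros [_ E] H1 H2. split; [apply (entails_Fmk H1)|]. rewrite E. apply cls_eq; auto.
Qed.

Ltac rep_facts := repeat match goal with x : LT |- _ =>
  lazymatch goal with _ : Fmk K (rep x) |- _ => fail | _ => pose proof (rep_ok x) end end.

Lemma represents_meet {x y : LT} {p q : fm G} :
  represents x p -> represents y q -> represents (mmeet A x y) (And2 p q).
Proof.
  intros Hx Hy. destruct (represents_entails (rep_represents x) Hx),
    (represents_entails (rep_represents y) Hy), Hx, Hy. rep_facts.
  apply (represents_equiv (p := And2 (rep x) (rep y))); [apply mkLT_represents|..];
    unfold entails in *; propositional.
Qed.

Lemma represents_join {x y : LT} {p q : fm G} :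
  represents x p -> represents y q -> represents (mjoin A x y) (Or2 p q).
Proof.
  intros Hx Hy. destruct (represents_entails (rep_represents x) Hx),
    (represents_entails (rep_represents y) Hy), Hx, Hy. rep_facts.
  apply (represents_equiv (p := Or2 (rep x) (rep y))); [apply mkLT_represents|..];
    unfold entails in *; propositional.
Qed.

Lemma represents_neg {x : LT} {p : fm G} : represents x p -> represents (mneg A x) (Neg p).
Proof.
  intros Hx. destruct (represents_entails (rep_represents x) Hx), Hx. rep_facts.
  apply (represents_equiv (p := Neg (rep x))); [apply mkLT_represents|..];
    unfold entails in *; propositional.
Qed.

Lemma represents_box {x : LT} {p : fm G} : represents x p -> represents (mbox A x) (Box p).
Proof.
  intros Hx. destruct (represents_entails (rep_represents x) Hx) as [H1 H2].
  apply (represents_equiv (p := Box (rep x))); [apply mkLT_represents| |].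
  - exact (derive_Nec H1).
  - exact (derive_Nec H2).
Qed.

Lemma represents_top : represents (mtop A) (TopF G).
Proof. apply mkLT_represents. Qed.

Lemma represents_bot : represents (mbot A) (BotF G).
Proof. apply mkLT_represents. Qed.

Lemma mle_entails {x y : LT} {p q : fm G} :
  represents x p -> represents y q -> (mle A x y <-> entails p q).
Proof.
  intros Hx Hy. pose proof (represents_meet Hx Hy) as Hm. destruct Hx as [Fp Ex], Hy as [Fq Ey].
  unfold mle. split.
  - intro E. rewrite E in Hm. destruct (represents_entails (conj Fp Ex) Hm) as [H1 _].
    apply (entails_trans H1). unfold entails; propositional.
  - intro H. apply (represents_eq Hm (conj Fp Ex)); unfold entails in *; propositional.
Qed.

Ltac represent := repeat first [eapply represents_meet | eapply represents_join
  | eapply represents_neg | eapply represents_box | apply represents_top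
  | apply represents_bot | apply rep_represents].

Lemma LT_boolean_algebra : boolean_algebra A.
Proof.
  constructor; intros; rep_facts;
    (eapply represents_eq; [represent | represent | unfold entails; propositional ..]).
Qed.

Lemma LT_modal_algebra : modal_algebra A.
Proof.
  split; [exact LT_boolean_algebra|split].
  - apply (represents_eq (represents_box represents_top) represents_top);
      unfold entails; [propositional|].
    assert (top_nec : [] ⊢ [Box (TopF G)]) by (apply (derive_Nec (l := [])); propositional).
    propositional.
  - intros a b. rep_facts.
    apply (represents_eq (represents_box (represents_meet (rep_represents a) (rep_represents b)))
      (represents_meet (represents_box (rep_represents a)) (represents_box (rep_represents b))));
      unfold entails.
    + apply (derive_RAnd2 HK);
        [apply (derive_Nec (l := [And2 (rep a) (rep b)]) (p := rep a))
        |apply (derive_Nec (l := [And2 (rep a) (rep b)]) (p := rep b))]; propositional.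
    + apply (derive_LAnd2 HK). apply (derive_Nec (l := [rep a; rep b]) (p := And2 (rep a) (rep b))).
      propositional.
Qed.

Lemma represents_aeval (v : nat -> LT) (p : mf) :
  represents (aeval A v p) (tr (fun n => rep (v n)) p).
Proof. induction p; simpl; represent; auto. Qed.

Lemma derive_L_instance {s : nat -> fm G} {p : mf} : L p -> Fmk K (tr s p) -> [] ⊢ [tr s p].
Proof.
  intros Lp F. apply (R_TL (S := sing (tr s p))).
  - intros x ->. right. split; eauto.
  - replace (U (sing (tr s p)) (lset [])) with (lset [tr s p])
      by (apply fset_ext; unfold U, sing, lset; simpl; firstorder).
    propositional.
Qed.

Lemma LT_L_algebra : L_algebra L A.
Proof.
  split; [exact LT_modal_algebra|]. intros p Lp v.
  destruct (represents_aeval v p) as [F E].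
  apply (represents_eq (conj F E) represents_top); unfold entails; [propositional|].
  pose proof (derive_L_instance Lp F). propositional.
Qed.

Lemma LT_glb_BigAnd {I : IdxT} {f : I -> fm G} (HF : Fmk K (BigAnd I f)) :
  is_glb A (fun x => exists i, proj1_sig x = cls K L T (f i)) (mkLT L T HF).
Proof.
  destruct (Fmk_inv HF) as [HI Hf]. split.
  - intros x [i E]. apply (mle_entails (mkLT_represents HF) (conj (Hf i) E)).
    apply (derive_LAnd_at i); auto. pose proof (Hf i); propositional.
  - intros y Hy. rep_facts. apply (mle_entails (rep_represents y) (mkLT_represents HF)).
    apply derive_RAnd; [exact HF| |solve_Fmk_list|solve_Fmk_list]. intros i.
    apply (mle_entails (rep_represents y) (mkLT_represents (Hf i))), Hy.
    exists i; reflexivity.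
Qed.

Lemma LT_lub_BigOr {I : IdxT} {f : I -> fm G} (HF : Fmk K (BigOr I f)) :
  is_lub A (fun x => exists i, proj1_sig x = cls K L T (f i)) (mkLT L T HF).
Proof.
  destruct (Fmk_inv HF) as [HI Hf]. split.
  - intros x [i E]. apply (mle_entails (conj (Hf i) E) (mkLT_represents HF)).
    apply (derive_ROr_at i); auto. pose proof (Hf i); propositional.
  - intros y Hy. rep_facts. apply (mle_entails (mkLT_represents HF) (rep_represents y)).
    apply derive_LOr; [exact HF| |solve_Fmk_list|solve_Fmk_list]. intros i.
    apply (mle_entails (mkLT_represents (Hf i)) (rep_represents y)), Hy.
    exists i; reflexivity.
Qed.

(* [LT] lives in a universe above [IdxT], so a small subset of [LT] is first
   reindexed by a subset of [K] before forming the big connectives. *)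
Lemma LT_kappa_complete : kappa_complete K A.
Proof.
  intros X HX. destruct (small_pred_enum HX) as (I & e & HI & He).
  set (f := fun i => rep (e i)).
  assert (Hf : forall i, Fmk K (f i)) by (intro; apply rep_ok).
  replace X with (fun x : LT => exists i, proj1_sig x = cls K L T (f i)).
  - split; [exists (mkLT L T (FAnd f HI Hf)); apply LT_glb_BigAnd
           |exists (mkLT L T (FOr f HI Hf)); apply LT_lub_BigOr].
  - apply functional_extensionality; intro x; apply propositional_extensionality.
    rewrite He. unfold f. split; intros [i E]; exists i.
    + apply (represents_eq (conj (rep_ok (e i)) E) (rep_represents (e i)));
        apply entails_refl, rep_ok.
    + rewrite E. apply rep_represents.
Qed.

End Lindenbaum_Tarski.

Theorem proposition4p3 (G : Type) (K : IdxT) (L : mf -> Prop) (T : fset G)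
  (HK : regular K) (HL : normal_logic L) (Hfmp : fmp L)
  (HT : forall p, T p -> Fmk K p) :
  let A := LT_ops L T HK in
  (* the operations are well defined on classes: [p] op [q] = [p op q] *)
  (forall (x y : LTcar K L T) (p q : fm G), Fmk K p -> Fmk K q ->
     proj1_sig x = cls K L T p -> proj1_sig y = cls K L T q ->
     proj1_sig (mmeet A x y) = cls K L T (And2 p q) /\
     proj1_sig (mjoin A x y) = cls K L T (Or2 p q) /\
     proj1_sig (mneg A x) = cls K L T (Neg p) /\
     proj1_sig (mbox A x) = cls K L T (Box p) /\
     (mle A x y <-> prov K L T (sing p) (sing q))) /\
  (* LT_L(G,kappa,T) is a kappa-complete L-algebra *)
  L_algebra L A /\ kappa_complete K A /\
  (* meets and joins of sets of size < kappa are given by big connectives *)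
  (forall (I : IdxT) (f : I -> fm G), lt_card I K -> (forall i, Fmk K (f i)) ->
     (exists m : LTcar K L T, proj1_sig m = cls K L T (BigAnd I f) /\
        is_glb A (fun x => exists i, proj1_sig x = cls K L T (f i)) m) /\
     (exists j : LTcar K L T, proj1_sig j = cls K L T (BigOr I f) /\
        is_lub A (fun x => exists i, proj1_sig x = cls K L T (f i)) j)).
Proof.
  intro A. split; [|split; [apply LT_L_algebra|split; [apply LT_kappa_complete|]]].
  - intros x y p q Fp Fq Ex Ey.
    assert (Hx : represents x p) by (split; auto).
    assert (Hy : represents y q) by (split; auto).
    split; [apply (represents_meet HK Hx Hy)|].
    split; [apply (represents_join HK Hx Hy)|].
    split; [apply (represents_neg HK Hx)|].
    split; [apply (represents_box HK Hx)|].
    rewrite !sing_lset. apply (mle_entails HK Hx Hy).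
  - intros I f HI Hf. split.
    + exists (mkLT L T (FAnd f HI Hf)). split; [reflexivity|apply LT_glb_BigAnd].
    + exists (mkLT L T (FOr f HI Hf)). split; [reflexivity|apply LT_lub_BigOr].
Qed.
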